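(* Let $\varphi:\mathbb{H}\to\mathbb{H}$ be a linear isometry with $\varphi(1)=1$. Then $\varphi(\varphi(x)x)=\varphi(x)x$ for all $x\in\mathbb{H}$ if and only if $\varphi\in\{I_{\mathbb{H}}\}\cup\mathcal{I}_1^-$. In particular $I_{\mathbb{H}}$ is the only proper linear isometry satisfying this condition.
   Context: $\mathbb{H}$ is the quaternions with Euclidean norm. $\mathcal{I}_1^-$ is the set of involutive linear isometries of $\mathbb{H}$ with negative determinant fixing $1$; equivalently $\mathcal{I}_1^-=\{\sigma_{\mathbb{H}}\}\cup\{x\mapsto a\bar x\bar a: a\in\mathrm{Im}(\mathbb{H}),\ |a|=1\}$, where $\sigma_{\mathbb{H}}(x)=\bar x$. A proper isometry is one with positive determinant. *)

From HB Require Import structures.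
From mathcomp Require Import all_boot all_order all_algebra.
From mathcomp Require Import reals.
Set Implicit Arguments. Unset Strict Implicit. Unset Printing Implicit Defensive.
Import Order.TTheory GRing.Theory Num.Theory.
Local Open Scope ring_scope.

(* q = q0 + q1 i + q2 j + q3 k *)
Record quat (R : realType) := Quat { q0 : R; q1 : R; q2 : R; q3 : R }.

Section Quat.
Variable R : realType.
Implicit Types x y a : quat R.

Definition qadd x y := Quat (q0 x + q0 y) (q1 x + q1 y) (q2 x + q2 y) (q3 x + q3 y).
Definition qscale (c : R) x := Quat (c * q0 x) (c * q1 x) (c * q2 x) (c * q3 x).
Definition qone : quat R := Quat 1 0 0 0.
Definition qmul x y :=
  Quat (q0 x * q0 y - q1 x * q1 y - q2 x * q2 y - q3 x * q3 y)
       (q0 x * q1 y + q1 x * q0 y + q2 x * q3 y - q3 x * q2 y)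
       (q0 x * q2 y - q1 x * q3 y + q2 x * q0 y + q3 x * q1 y)
       (q0 x * q3 y + q1 x * q2 y - q2 x * q1 y + q3 x * q0 y).
Definition qconj x := Quat (q0 x) (- q1 x) (- q2 x) (- q3 x).
Definition qnorm x := Num.sqrt (q0 x ^+ 2 + q1 x ^+ 2 + q2 x ^+ 2 + q3 x ^+ 2).
Definition qpure x := q0 x = 0.

Definition qcoord x (i : 'I_4) : R :=
  match val i with 0 => q0 x | 1 => q1 x | 2 => q2 x | _ => q3 x end.
Definition qbasis (i : 'I_4) : quat R :=
  match val i with 0 => Quat 1 0 0 0 | 1 => Quat 0 1 0 0
                 | 2 => Quat 0 0 1 0 | _ => Quat 0 0 0 1 end.

Definition qlinear (phi : quat R -> quat R) :=
  (forall x y, phi (qadd x y) = qadd (phi x) (phi y)) /\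
  (forall c x, phi (qscale c x) = qscale c (phi x)).
Definition qisometry (phi : quat R -> quat R) := forall x, qnorm (phi x) = qnorm x.

Definition qmat (phi : quat R -> quat R) : 'M[R]_4 :=
  \matrix_(i < 4, j < 4) qcoord (phi (qbasis j)) i.
Definition qdet (phi : quat R -> quat R) : R := \det (qmat phi).

Definition in_I1minus (phi : quat R -> quat R) :=
  (forall x, phi x = qconj x) \/
  (exists a, qpure a /\ qnorm a = 1 /\ forall x, phi x = qmul (qmul a (qconj x)) (qconj a)).
End Quat.

(** Write x = s + v with s real and v pure. An isometry fixing 1 maps pure
    quaternions to pure ones, so phi (s + v) = s + M v for an orthogonal map M
    of R^3. Testing the condition on pure v gives M (M v × v) = M v × v and
    testing it on 1 + v then gives M (M v) = v. For an orthogonal involution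
    whose (-1)-eigenspace E- and (+1)-eigenspace E+ are both non-trivial, the
    first identity forces q × p into E+ for q in E+ and p in E-, hence q × p is
    orthogonal to E-; this makes E- a line, so M is a reflection
    w |-> w - 2 (u.w) u, which is x |-> u xbar ubar on H. The remaining cases
    M = ±1 give the identity and conjugation. Every map of I_1^- has
    determinant -1. *)
From HB Require Import structures.
From mathcomp Require Import all_boot all_order all_algebra.
From mathcomp Require Import reals ring lra.
From Stdlib Require Import Classical.
Set Implicit Arguments. Unset Strict Implicit. Unset Printing Implicit Defensive.
Import Order.TTheory GRing.Theory Num.Theory.
Local Open Scope ring_scope.

Section Vec3.
Variable R : rcfType.

Record v3 := V3 { c1 : R; c2 : R; c3 : R }.

Definition vadd u v := V3 (c1 u + c1 v) (c2 u + c2 v) (c3 u + c3 v).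
Definition vopp u := V3 (- c1 u) (- c2 u) (- c3 u).
Definition vscale (s : R) u := V3 (s * c1 u) (s * c2 u) (s * c3 u).
Definition dot u v := c1 u * c1 v + c2 u * c2 v + c3 u * c3 v.
Definition cross u v :=
  V3 (c2 u * c3 v - c3 u * c2 v) (c3 u * c1 v - c1 u * c3 v)
     (c1 u * c2 v - c2 u * c1 v).
Definition vreflect u w := vadd w (vopp (vscale (2 * dot u w) u)).

Lemma vext u v : c1 u = c1 v -> c2 u = c2 v -> c3 u = c3 v -> u = v.
Proof. by case: u; case: v => /= ??? ??? -> -> ->. Qed.

Lemma vscale1 u : vscale 1 u = u.
Proof. by apply: vext => /=; rewrite mul1r. Qed.

Lemma dotC a b : dot a b = dot b a.
Proof. by rewrite /dot; ring. Qed.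

Lemma dotDl a b c : dot (vadd a b) c = dot a c + dot b c.
Proof. by rewrite /dot /=; ring. Qed.

Lemma dotDr a b c : dot c (vadd a b) = dot c a + dot c b.
Proof. by rewrite /dot /=; ring. Qed.

Lemma dotNl a c : dot (vopp a) c = - dot a c.
Proof. by rewrite /dot /=; ring. Qed.

Lemma dotNr a c : dot c (vopp a) = - dot c a.
Proof. by rewrite /dot /=; ring. Qed.

Lemma dotZl s a c : dot (vscale s a) c = s * dot a c.
Proof. by rewrite /dot /=; ring. Qed.

Lemma dotZr s a c : dot c (vscale s a) = s * dot c a.
Proof. by rewrite /dot /=; ring. Qed.

Lemma dot_ge0 u : 0 <= dot u u.
Proof. by rewrite /dot; nra. Qed.

Lemma dot_eq0 u : dot u u = 0 -> u = V3 0 0 0.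
Proof.
rewrite /dot => h.
have sq0 (t : R) : t * t = 0 -> t = 0 by move/eqP; rewrite mulf_eq0 orbb => /eqP.
by apply: vext; apply: sq0; nra.
Qed.

Lemma dot_normalize u : dot u u != 0 ->
  dot (vscale (Num.sqrt (dot u u))^-1 u) (vscale (Num.sqrt (dot u u))^-1 u) = 1.
Proof.
move=> u0; have u_gt0 : 0 < dot u u by rewrite lt_def u0 dot_ge0.
rewrite dotZl dotZr mulrA -expr2 exprVn sqr_sqrtr ?dot_ge0 //.
by rewrite mulVf.
Qed.

Lemma cross_cross u p :
  cross u (cross p u) = vadd (vscale (dot u u) p) (vopp (vscale (dot u p) u)).
Proof. by apply: vext; rewrite /dot /=; ring. Qed.

(* Expansion of the Gram determinant of q, p, u. *)
Lemma triple_product_sqr q p u :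
  dot (cross q p) u ^+ 2 = dot q q * dot (cross p u) (cross p u)
    + 2 * dot q p * dot p u * dot q u - dot p p * dot q u ^+ 2
    - dot u u * dot q p ^+ 2.
Proof. by rewrite /dot /=; ring. Qed.

Section OrthogonalInvolution.
Variable M : v3 -> v3.
Hypothesis MD : forall u v, M (vadd u v) = vadd (M u) (M v).
Hypothesis MZ : forall s v, M (vscale s v) = vscale s (M v).
Hypothesis M_dot : forall v, dot (M v) (M v) = dot v v.
Hypothesis MK : forall v, M (M v) = v.
Hypothesis M_cross : forall v, M (cross (M v) v) = cross (M v) v.

Lemma MN v : M (vopp v) = vopp (M v).
Proof.
have -> : vopp v = vscale (-1) v by apply: vext => /=; ring.
by rewrite MZ; apply: vext => /=; ring.
Qed.

Lemma M_dot2 a b : dot (M a) (M b) = dot a b.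
Proof.
have := M_dot (vadd a b).
by rewrite MD !dotDl !dotDr !M_dot (dotC (M b)) (dotC b); lra.
Qed.

Lemma dot_eigen a b : M a = a -> M b = vopp b -> dot a b = 0.
Proof. by move=> Ma Mb; have := M_dot2 a b; rewrite Ma Mb dotNr; lra. Qed.

Lemma M_anti_part w : M (vadd w (vopp (M w))) = vopp (vadd w (vopp (M w))).
Proof. by rewrite MD MN MK; apply: vext => /=; ring. Qed.

Lemma M_sym_part w : M (vadd w (M w)) = vadd w (M w).
Proof. by rewrite MD MK; apply: vext => /=; ring. Qed.

(* The hypothesis applied to q + p, where M (q + p) = q - p. *)
Lemma M_cross_eigen q p : M q = q -> M p = vopp p -> M (cross q p) = cross q p.
Proof.
move=> Mq Mp; have := M_cross (vadd q p); rewrite MD Mq Mp.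
have -> : cross (vadd q (vopp p)) (vadd q p) = vscale 2 (cross q p).
  by apply: vext => /=; ring.
rewrite MZ => h; apply: vext.
- by have := congr1 c1 h => /=; lra.
- by have := congr1 c2 h => /=; lra.
- by have := congr1 c3 h => /=; lra.
Qed.

Lemma anti_eigen_cross0 q p u : dot q q != 0 ->
  M q = q -> M p = vopp p -> M u = vopp u -> cross p u = V3 0 0 0.
Proof.
move=> q0 Mq Mp Mu; apply: dot_eq0.
have := triple_product_sqr q p u.
rewrite (dot_eigen (M_cross_eigen Mq Mp) Mu) (dot_eigen Mq Mp) (dot_eigen Mq Mu).
rewrite !expr2 !(mul0r, mulr0, subr0, addr0) => /esym/eqP.
by rewrite mulf_eq0 (negbTE q0) => /eqP.
Qed.

Lemma orthogonal_involution_cases :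
  (forall v, M v = v) \/ (forall v, M v = vopp v) \/
  exists u, dot u u = 1 /\ forall w, M w = vreflect u w.
Proof.
case: (classic (forall v, M v = v)) => [|/not_all_ex_not [e Me]]; first by left.
case: (classic (forall v, M v = vopp v)) => [|/not_all_ex_not [f Mf]].
  by right; left.
right; right.
pose u0 := vadd e (vopp (M e)); pose q := vadd f (M f).
have u0_neq0 : dot u0 u0 != 0.
  by apply/eqP => /dot_eq0 [] h1 h2 h3; apply: Me; apply: vext; lra.
have q_neq0 : dot q q != 0.
  by apply/eqP => /dot_eq0 [] h1 h2 h3; apply: Mf; apply: vext => /=; lra.
pose u := vscale (Num.sqrt (dot u0 u0))^-1 u0.
exists u; split; first exact: dot_normalize.
have Mu : M u = vopp u by rewrite MZ M_anti_part; apply: vext => /=; ring.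
move=> w; set p := vadd w (vopp (M w)).
have pu0 := anti_eigen_cross0 q_neq0 (M_sym_part f) (M_anti_part w) Mu.
have := cross_cross u p; rewrite pu0 dot_normalize // vscale1.
have -> : dot u p = 2 * dot u w.
  have uMw : dot u (M w) = - dot u w by rewrite -M_dot2 MK Mu dotNl.
  by rewrite /p dotDr dotNr uMw; lra.
move=> h; apply: vext.
- by have := congr1 c1 h => /=; lra.
- by have := congr1 c2 h => /=; lra.
- by have := congr1 c3 h => /=; lra.
Qed.

End OrthogonalInvolution.
End Vec3.

Section Quaternions.
Variable R : realType.
Implicit Types (x a : quat R) (u v : v3 R).

Definition qmk (s : R) v : quat R := Quat s (c1 v) (c2 v) (c3 v).
Definition vec x : v3 R := V3 (q1 x) (q2 x) (q3 x).

Lemma qext x y : q0 x = q0 y -> q1 x = q1 y -> q2 x = q2 y -> q3 x = q3 y -> x = y.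
Proof. by case: x; case: y => /= ???? ???? -> -> -> ->. Qed.

Lemma qmk_eta x : qmk (q0 x) (vec x) = x.
Proof. by case: x. Qed.

Lemma vec_qmk s v : vec (qmk s v) = v.
Proof. by case: v. Qed.

Lemma qmk_split s v : qmk s v = qadd (qscale s (qone R)) (qmk 0 v).
Proof. by apply: qext => /=; ring. Qed.

Lemma qmul_pure u v : qmul (qmk 0 u) (qmk 0 v) = qmk (- dot u v) (cross u v).
Proof. by apply: qext; rewrite /dot /=; ring. Qed.

Lemma qmul_one_pure u v :
  qmul (qmk 1 u) (qmk 1 v) = qmk (1 - dot u v) (vadd (vadd u v) (cross u v)).
Proof. by apply: qext; rewrite /dot /=; ring. Qed.

Lemma qmul_conj_unit_pure u x : dot u u = 1 ->
  qmul (qmul (qmk 0 u) (qconj x)) (qconj (qmk 0 u)) = qmk (q0 x) (vreflect u (vec x)).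
Proof.
move=> u1.
have -> : qmul (qmul (qmk 0 u) (qconj x)) (qconj (qmk 0 u)) =
    qmk (dot u u * q0 x)
        (vadd (vscale (dot u u) (vec x)) (vopp (vscale (2 * dot u (vec x)) u))).
  by apply: qext; rewrite /dot /=; ring.
by rewrite u1 mul1r vscale1.
Qed.

Lemma qnorm_sqr x : qnorm x ^+ 2 = q0 x ^+ 2 + q1 x ^+ 2 + q2 x ^+ 2 + q3 x ^+ 2.
Proof. by rewrite sqr_sqrtr // !addr_ge0 // sqr_ge0. Qed.

Lemma qnorm_pure u : qnorm (qmk 0 u) = Num.sqrt (dot u u).
Proof. by rewrite /qnorm /dot /= expr0n add0r !expr2. Qed.

Lemma qnorm1_pure a : qpure a -> qnorm a = 1 -> q1 a ^+ 2 + q2 a ^+ 2 + q3 a ^+ 2 = 1.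
Proof. by move=> a0 a1; have := qnorm_sqr a; rewrite a1 a0 expr1n expr0n add0r. Qed.

Lemma conj_fixes_product x : qconj (qmul (qconj x) x) = qmul (qconj x) x.
Proof. by apply: qext => /=; ring. Qed.

Lemma unit_pure_sandwich_fixes_product a x : qpure a -> qnorm a = 1 ->
  let f y := qmul (qmul a (qconj y)) (qconj a) in f (qmul (f x) x) = qmul (f x) x.
Proof.
move=> a0 /(qnorm1_pure a0) n1 /=; move: a0 n1.
case: a => a0 a1 a2 a3; rewrite /qpure /= => -> n1.
set y := qmul _ x.
have -> : qmul (qmul (Quat 0 a1 a2 a3) (qconj y)) (qconj (Quat 0 a1 a2 a3)) =
    qscale (a1 ^+ 2 + a2 ^+ 2 + a3 ^+ 2) y.
  by apply: qext; rewrite /y /=; ring.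
by rewrite n1; apply: qext => /=; ring.
Qed.

Lemma in_I1minus_fixes_product (phi : quat R -> quat R) : in_I1minus phi ->
  forall x, phi (qmul (phi x) x) = qmul (phi x) x.
Proof.
case=> [phiC | [a [a0 [a1 phiE]]]] x; first by rewrite !phiC conj_fixes_product.
by rewrite !phiE; apply: unit_pure_sandwich_fixes_product.
Qed.

Section FixingOne.
Variable phi : quat R -> quat R.
Hypothesis phi_lin : qlinear phi.
Hypothesis phi_iso : qisometry phi.
Hypothesis phi1 : phi (qone R) = qone R.

Definition phiv v := vec (phi (qmk 0 v)).

(* |phi (1 + v)| = |1 + v| together with |phi v| = |v| kills the real part of phi v. *)
Lemma phi_pure v : phi (qmk 0 v) = qmk 0 (phiv v).
Proof.
have normE x : qnorm (phi x) ^+ 2 = qnorm x ^+ 2 by rewrite phi_iso.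
have := normE (qmk 1 v); have := normE (qmk 0 v).
rewrite [qmk 1 v]qmk_split phi_lin.1 phi_lin.2 phi1 /phiv !qnorm_sqr.
case: (phi (qmk 0 v)) => y0 y1 y2 y3 /= e0 e1.
by apply: qext => //=; nra.
Qed.

Lemma phi_qmk s v : phi (qmk s v) = qmk s (phiv v).
Proof. by rewrite qmk_split phi_lin.1 phi_lin.2 phi1 phi_pure -qmk_split. Qed.

Lemma phivD u v : phiv (vadd u v) = vadd (phiv u) (phiv v).
Proof.
rewrite /phiv; have -> : qmk 0 (vadd u v) = qadd (qmk 0 u) (qmk 0 v).
  by apply: qext => /=; ring.
by rewrite phi_lin.1.
Qed.

Lemma phivZ s v : phiv (vscale s v) = vscale s (phiv v).
Proof.
rewrite /phiv; have -> : qmk 0 (vscale s v) = qscale s (qmk 0 v).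
  by apply: qext => /=; ring.
by rewrite phi_lin.2.
Qed.

Lemma phiv_dot v : dot (phiv v) (phiv v) = dot v v.
Proof.
have := congr1 (fun t => t ^+ 2) (phi_iso (qmk 0 v)).
by rewrite /= phi_pure !qnorm_pure !sqr_sqrtr ?dot_ge0.
Qed.

Hypothesis phi_fixes_product : forall x, phi (qmul (phi x) x) = qmul (phi x) x.

Lemma phiv_cross v : phiv (cross (phiv v) v) = cross (phiv v) v.
Proof.
have := phi_fixes_product (qmk 0 v).
by rewrite phi_pure qmul_pure phi_qmk => /(congr1 vec); rewrite !vec_qmk.
Qed.

Lemma phivK v : phiv (phiv v) = v.
Proof.
have := phi_fixes_product (qmk 1 v).
rewrite phi_qmk qmul_one_pure phi_qmk => /(congr1 vec).
rewrite !vec_qmk !phivD phiv_cross => h; apply: vext.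
- by have := congr1 (@c1 R) h => /=; lra.
- by have := congr1 (@c2 R) h => /=; lra.
- by have := congr1 (@c3 R) h => /=; lra.
Qed.

Lemma fixes_product_cases : (forall x, phi x = x) \/ in_I1minus phi.
Proof.
have [phivI | [phivN | [u [u1 phivE]]]] :=
  orthogonal_involution_cases phivD phivZ phiv_dot phivK phiv_cross.
- by left => x; rewrite -[x]qmk_eta phi_qmk phivI.
- by right; left => x; rewrite -[x]qmk_eta phi_qmk phivN.
right; right; exists (qmk 0 u); split; first by [].
split; first by rewrite qnorm_pure u1 sqrtr1.
by move=> x; rewrite qmul_conj_unit_pure // -{1}[x]qmk_eta phi_qmk phivE.
Qed.

End FixingOne.
End Quaternions.

Lemma det_mx4 (R : comNzRingType) (f : nat -> nat -> R) :
  \det (\matrix_(i < 4, j < 4) f i j) =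
  f 0 0 * (f 1 1 * (f 2 2 * f 3 3 - f 2 3 * f 3 2)
         - f 1 2 * (f 2 1 * f 3 3 - f 2 3 * f 3 1)
         + f 1 3 * (f 2 1 * f 3 2 - f 2 2 * f 3 1))
  - f 0 1 * (f 1 0 * (f 2 2 * f 3 3 - f 2 3 * f 3 2)
         - f 1 2 * (f 2 0 * f 3 3 - f 2 3 * f 3 0)
         + f 1 3 * (f 2 0 * f 3 2 - f 2 2 * f 3 0))
  + f 0 2 * (f 1 0 * (f 2 1 * f 3 3 - f 2 3 * f 3 1)
         - f 1 1 * (f 2 0 * f 3 3 - f 2 3 * f 3 0)
         + f 1 3 * (f 2 0 * f 3 1 - f 2 1 * f 3 0))
  - f 0 3 * (f 1 0 * (f 2 1 * f 3 2 - f 2 2 * f 3 1)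
         - f 1 1 * (f 2 0 * f 3 2 - f 2 2 * f 3 0)
         + f 1 2 * (f 2 0 * f 3 1 - f 2 1 * f 3 0)).
Proof.
rewrite (expand_det_row _ ord0) !big_ord_recl big_ord0 /cofactor.
rewrite !(expand_det_row _ ord0) !big_ord_recl !big_ord0 /cofactor.
rewrite !(expand_det_row _ ord0) !big_ord_recl !big_ord0 /cofactor.
by rewrite !det_mx11 !mxE /bump /=; ring.
Qed.

(* [qcoord] and [qbasis] read on [nat] indices, so that [det_mx4] applies to [qmat]. *)
Definition qcoordn (R : realType) (n : nat) (x : quat R) : R :=
  match n with 0 => q0 x | 1 => q1 x | 2 => q2 x | _ => q3 x end.
Definition qbasisn (R : realType) (n : nat) : quat R :=
  match n with 0 => Quat 1 0 0 0 | 1 => Quat 0 1 0 0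
             | 2 => Quat 0 0 1 0 | _ => Quat 0 0 0 1 end.

Lemma qdetE (R : realType) (phi : quat R -> quat R) :
  qdet phi = \det (\matrix_(i < 4, j < 4) qcoordn i (phi (qbasisn R j))).
Proof. by []. Qed.

Lemma qdet_I1minus (R : realType) (phi : quat R -> quat R) :
  in_I1minus phi -> qdet phi = -1.
Proof.
case=> [phiC | [a [a0 [a1 phiE]]]].
  by rewrite qdetE (det_mx4 (fun i j => qcoordn i (phi (qbasisn R j)))) /= !phiC /=; ring.
move: a1 => /(qnorm1_pure a0) n1; move: a0 n1 phiE.
case: a => a0 a1 a2 a3; rewrite /qpure /= => -> n1 phiE.
have -> : qdet phi = - (a1 ^+ 2 + a2 ^+ 2 + a3 ^+ 2) ^+ 4.
  by rewrite qdetE (det_mx4 (fun i j => qcoordn i (phi (qbasisn R j)))) /= !phiE /=; ring.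
by rewrite n1 expr1n.
Qed.

Theorem lemma8 (R : realType) (phi : quat R -> quat R)
  (hlin : qlinear phi) (hiso : qisometry phi) (h1 : phi (qone R) = qone R) :
  ((forall x, phi (qmul (phi x) x) = qmul (phi x) x) <->
     ((forall x, phi x = x) \/ in_I1minus phi)) /\
  (0 < qdet phi -> (forall x, phi (qmul (phi x) x) = qmul (phi x) x) ->
     forall x, phi x = x).
Proof.
split; first split.
- exact: fixes_product_cases.
- case=> [phiI x | ]; first by rewrite !phiI.
  exact: in_I1minus_fixes_product.
move=> det_gt0 hc; case: (fixes_product_cases hlin hiso h1 hc) => // /qdet_I1minus.
by move=> det_eq; rewrite det_eq ltr0N1 in det_gt0.
Qed.
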